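(* Let $G$ be an index coding problem on $n$ messages, let $1\le n_1<n$, and let $G_1$ and $G_2$ be the subproblems induced on $[1:n_1]$ and $[n_1+1:n]$, with capacity regions $\mathscr{C}_1\subseteq\mathbb{R}^{n_1}$ and $\mathscr{C}_2\subseteq\mathbb{R}^{n-n_1}$. If $G$ has an edge from every node of $G_1$ to every node of $G_2$ and from every node of $G_2$ to every node of $G_1$ (i.e., $[n_1+1:n]\subseteq A_j$ for all $j\le n_1$ and $[1:n_1]\subseteq A_j$ for all $j>n_1$), then \[ \mathscr{C}=\bigl\{({\bf R}_1,{\bf R}_2): {\bf R}_1\in\mathscr{C}_1,\ {\bf R}_2\in\mathscr{C}_2\bigr\}=\mathscr{C}_1\times\mathscr{C}_2. \]
   Context: Index coding: an instance with $n$ messages is specified by side information sets $A_1,\ldots,A_n$ with $A_j\subseteq[1:n]\setminus\{j\}$, equivalently a directed side information graph $G$ on $[1:n]$ with an edge $i\to j$ iff $i\in A_j$. A $(t_1,\ldots,t_n,r)$ index code (with $t_j$ nonnegative integers, $r$ a positive integer) consists of an encoder $\phi:\prod_i\{0,1\}^{t_i}\to\{0,1\}^r$ and decoders $\psi_j:\{0,1\}^r\times\prod_{k\in A_j}\{0,1\}^{t_k}\to\{0,1\}^{t_j}$ with $\psi_j(\phi(x^n),(x_k)_{k\in A_j})=x_j$ for all message tuples $x^n$ and all $j$. A nonnegative rate tuple is achievable if $R_j\le t_j/r$ for all $j$ for some such code; the capacity region is the closure of the set of achievable rate tuples. The subproblem induced on a vertex subset $S$ is the index coding problem with messages indexed by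 $S$ and side information sets $A_j\cap S$, $j\in S$ (i.e., the vertex-induced subgraph $G[S]$). *)

From mathcomp Require Import all_boot.
From Stdlib Require Import Reals.
Set Implicit Arguments. Unset Strict Implicit. Unset Printing Implicit Defensive.

(* An index coding problem on n messages: side information sets
   A j : {set 'I_n}, with j \notin A j (stated as a hypothesis where used). *)

Definition messages (n : nat) (t : 'I_n -> nat) : Type :=
  forall k : 'I_n, (t k).-tuple bool.

Definition is_index_code (n : nat) (A : 'I_n -> {set 'I_n}) (t : 'I_n -> nat)
  (r : nat) (phi : messages t -> r.-tuple bool)
  (psi : forall j : 'I_n, r.-tuple bool -> messages t -> (t j).-tuple bool) : Prop :=
  (forall (j : 'I_n) (y : r.-tuple bool) (x x' : messages t),
      (forall k, k \in A j -> x k = x' k) -> psi j y x = psi j y x') /\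
  (forall (x : messages t) (j : 'I_n), psi j (phi x) x = x j).

Definition achievable (n : nat) (A : 'I_n -> {set 'I_n}) (Rt : 'I_n -> R) : Prop :=
  (forall j, (0 <= Rt j)%R) /\
  exists (t : 'I_n -> nat) (r : nat), (0 < r)%N /\
    exists (phi : messages t -> r.-tuple bool)
           (psi : forall j : 'I_n, r.-tuple bool -> messages t -> (t j).-tuple bool),
      is_index_code A phi psi /\
      (forall j, (Rt j <= INR (t j) / INR r)%R).

(* Capacity region = closure (in R^n, standard topology) of the achievable set. *)
Definition in_capacity (n : nat) (A : 'I_n -> {set 'I_n}) (Rt : 'I_n -> R) : Prop :=
  forall eps : R, (0 < eps)%R ->
    exists Rt' : 'I_n -> R, achievable A Rt' /\
      (forall j, (Rabs (Rt j - Rt' j) < eps)%R).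

(* Subproblem induced on the image of an (injective, order-preserving)
   reindexing f : 'I_m -> 'I_n: messages indexed by the image, side
   information A_j intersected with the image. *)
Definition induced (m n : nat) (f : 'I_m -> 'I_n) (A : 'I_n -> {set 'I_n})
  : 'I_m -> {set 'I_m} :=
  fun j => [set k | f k \in A (f j)].

(* Restricting a code for G to the messages of G1 (filling the remaining
   messages with a fixed default) gives a code for G1 of the same rates, so
   the capacity region of G projects into C1 x C2.  Conversely, codes for G1
   and G2 are first brought to a common codeword length r1 r2 by repetition;
   the bitwise XOR of the two codewords is then a code for G, since every
   receiver of G1 knows all messages of G2, hence their codeword, and can
   strip it off (and symmetrically). *)
From mathcomp Require Import all_boot.
From Stdlib Require Import Reals.
From Stdlib Require Import ClassicalEpsilon FunctionalExtensionality PropExtensionality.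
Set Implicit Arguments. Unset Strict Implicit. Unset Printing Implicit Defensive.

(* An encoder admits decoders iff any two message tuples with the same
   codeword that agree on the side information of [j] agree on [x j]. *)
Definition decodable (n : nat) (A : 'I_n -> {set 'I_n}) (t : 'I_n -> nat) (r : nat)
  (phi : messages t -> r.-tuple bool) : Prop :=
  forall j (x x' : messages t), (forall k, k \in A j -> x k = x' k) ->
    phi x = phi x' -> x j = x' j.

Definition has_code (n : nat) (A : 'I_n -> {set 'I_n}) (t : 'I_n -> nat) (r : nat) : Prop :=
  exists phi : messages t -> r.-tuple bool, decodable A phi.

Section Decoders.
Variables (n : nat) (A : 'I_n -> {set 'I_n}).

Lemma index_code_decodable t r (phi : messages t -> r.-tuple bool) psi :
  is_index_code A phi psi -> decodable A phi.
Proof.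
case=> psi_local psi_correct j x x' xx' phixx'.
by rewrite -psi_correct phixx' (psi_local j _ x x' xx') psi_correct.
Qed.

Lemma decodable_index_code t r (phi : messages t -> r.-tuple bool) :
  decodable A phi -> exists psi, is_index_code A phi psi.
Proof.
move=> phi_dec.
have m0 : inhabited (messages t) by constructor=> k; exact: [tuple of nseq (t k) false].
pose consistent j y (x x'' : messages t) :=
  (forall k, k \in A j -> x'' k = x k) /\ phi x'' = y.
exists (fun j y x => epsilon m0 (consistent j y x) j); split.
- move=> j y x x' xx'.
  suff -> : consistent j y x = consistent j y x' by [].
  apply: functional_extensionality => x''; apply: propositional_extensionality.
  by split=> -[x''x phix'']; split=> // k kA; rewrite x''x // xx'.
- move=> x j.
  have [] : consistent j (phi x) x (epsilon m0 (consistent j (phi x) x)).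
    by apply: epsilon_spec; exists x.
  exact: phi_dec.
Qed.

Lemma achievableP Rt :
  achievable A Rt <->
  (forall j, (0 <= Rt j)%R) /\
  exists (t : 'I_n -> nat) (r : nat), [/\ (0 < r)%N, has_code A t r &
    forall j, (Rt j <= INR (t j) / INR r)%R].
Proof.
split=> -[Rt_ge0 [t [r code]]]; split=> //; exists t, r; move: code.
- case=> r_gt0 [phi [psi [phipsi rates]]].
  by split=> //; exists phi; apply: index_code_decodable phipsi.
- case=> r_gt0 [phi phi_dec] rates.
  have [psi phipsi] := decodable_index_code phi_dec.
  by split=> //; exists phi, psi.
Qed.

End Decoders.

Definition fin_bij (T U : finType) (e : #|T| = #|U|) (x : T) : U :=
  enum_val (cast_ord e (enum_rank x)).

Lemma fin_bijK (T U : finType) (e : #|T| = #|U|) : cancel (fin_bij e) (fin_bij (esym e)).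
Proof. by move=> x; rewrite /fin_bij enum_valK cast_ordK enum_rankK. Qed.

Lemma fin_bij_inj (T U : finType) (e : #|T| = #|U|) : injective (fin_bij e).
Proof. exact: can_inj (fin_bijK e). Qed.

Lemma card_tuple_blocks (m k : nat) :
  #|{: (m * k).-tuple bool}| = #|{: {ffun 'I_k -> m.-tuple bool}}|.
Proof. by rewrite card_ffun !card_tuple card_bool card_ord expnM. Qed.

(* Time sharing: encode [k] blocks of messages independently. *)
Lemma has_code_repeat n (A : 'I_n -> {set 'I_n}) t r k :
  has_code A t r -> has_code A (fun j => t j * k) (r * k).
Proof.
case=> phi phi_dec.
pose block (x : messages (fun j => t j * k)) (i : 'I_k) : messages t :=
  fun j => fin_bij (card_tuple_blocks (t j) k) (x j) i.
exists (fun x => fin_bij (esym (card_tuple_blocks r k)) [ffun i => phi (block x i)]).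
move=> j x x' xx' /fin_bij_inj /ffunP phixx'.
apply: (@fin_bij_inj _ _ (card_tuple_blocks (t j) k)); apply/ffunP => i.
have := phixx' i; rewrite !ffunE => /phi_dec; apply=> l lA.
by rewrite /block xx'.
Qed.

Definition xor_tuple r (u v : r.-tuple bool) : r.-tuple bool :=
  [tuple tnth u i (+) tnth v i | i < r].

Lemma xor_tupleC r (u v : r.-tuple bool) : xor_tuple u v = xor_tuple v u.
Proof. by apply: eq_from_tnth => i; rewrite !tnth_mktuple addbC. Qed.

Lemma xor_tuple_injl r (v : r.-tuple bool) :
  injective (fun u : r.-tuple bool => xor_tuple u v).
Proof.
move=> u u' e; apply: eq_from_tnth => i.
have := congr1 (fun z => tnth z i) e; rewrite !tnth_mktuple.
by move/(congr1 (addb^~ (tnth v i))); rewrite !addbK.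
Qed.

Lemma INR_div_mulr t r k : (0 < r)%N -> (0 < k)%N ->
  (INR (t * k) / INR (r * k) = INR t / INR r)%R.
Proof.
move=> r_gt0 k_gt0; rewrite !mult_INR; field.
by split; apply/not_0_INR/eqP; rewrite -lt0n.
Qed.

Section Induced.
Variables (m n : nat) (f : 'I_m -> 'I_n) (t : 'I_n -> nat).
Hypothesis f_inj : injective f.

Definition tcast_index (i j : 'I_n) (v : (t i).-tuple bool) : (t j).-tuple bool :=
  match i =P j with
  | ReflectT e => tcast (congr1 t e) v
  | ReflectF _ => nseq_tuple (t j) false
  end.
Arguments tcast_index {i j} v.

Lemma tcast_index_id i (v : (t i).-tuple bool) : tcast_index v = v :> (t i).-tuple bool.
Proof.
rewrite /tcast_index; case: eqP => [e|//].
by rewrite (eq_irrelevance e erefl) tcast_id.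
Qed.

Definition extend (d : messages t) (x1 : forall a, (t (f a)).-tuple bool) : messages t :=
  fun k => if [pick a | f a == k] is Some a then tcast_index (x1 a) else d k.

Lemma extend_f d x1 a : extend d x1 (f a) = x1 a.
Proof.
rewrite /extend; case: pickP => [a' /eqP/f_inj ->|/(_ a)]; first exact: tcast_index_id.
by rewrite eqxx.
Qed.

Lemma has_code_induced (A : 'I_n -> {set 'I_n}) r :
  has_code A t r -> has_code (induced f A) (fun a => t (f a)) r.
Proof.
case=> phi phi_dec.
pose d : messages t := fun k => nseq_tuple (t k) false.
exists (fun x1 => phi (extend d x1)) => a x1 x1' x1x1' phix1x1'.
rewrite -(extend_f d x1) -(extend_f d x1'); apply: phi_dec phix1x1' => k kA.
rewrite /extend; case: pickP => [b /eqP fb|//].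
by rewrite x1x1' // inE fb.
Qed.

End Induced.

Lemma in_capacity_induced m n (f : 'I_m -> 'I_n) (f_inj : injective f)
  (A : 'I_n -> {set 'I_n}) Rt :
  in_capacity A Rt -> in_capacity (induced f A) (fun i => Rt (f i)).
Proof.
move=> Rt_cap eps eps_gt0.
have [Rt' [/achievableP [Rt'_ge0 [t' [r [r_gt0 code rates]]]] close]] := Rt_cap eps eps_gt0.
exists (fun i => Rt' (f i)); split=> [|j]; last exact: close.
apply/achievableP; split=> [j|]; first exact: Rt'_ge0.
by exists (fun a => t' (f a)), r; split=> //; apply: has_code_induced.
Qed.

Section Join.
Variables (n1 n2 : nat).

Definition join_fun (T : Type) (f1 : 'I_n1 -> T) (f2 : 'I_n2 -> T) (j : 'I_(n1 + n2)) : T :=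
  match fintype.split j with inl a => f1 a | inr b => f2 b end.

Lemma join_fun_lshift T (f1 : 'I_n1 -> T) f2 a : join_fun f1 f2 (lshift n2 a) = f1 a.
Proof. by rewrite /join_fun (unsplitK (inl _ a)). Qed.

Lemma join_fun_rshift T (f1 : 'I_n1 -> T) f2 b : join_fun f1 f2 (rshift n1 b) = f2 b.
Proof. by rewrite /join_fun (unsplitK (inr _ b)). Qed.

Lemma join_fun_split T (f : 'I_(n1 + n2) -> T) :
  join_fun (fun a => f (lshift n2 a)) (fun b => f (rshift n1 b)) = f.
Proof.
apply: functional_extensionality => j; rewrite /join_fun.
by case: splitP => [a|b] ja; congr f; apply: val_inj; rewrite /= ja.
Qed.

Variables (A : 'I_(n1 + n2) -> {set 'I_(n1 + n2)}).
Hypothesis h12 : forall (j : 'I_n1) (k : 'I_n2), rshift n1 k \in A (lshift n2 j).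
Hypothesis h21 : forall (j : 'I_n1) (k : 'I_n2), lshift n2 j \in A (rshift n1 k).

Lemma has_code_join (t1 : 'I_n1 -> nat) (t2 : 'I_n2 -> nat) r :
  has_code (induced (@lshift n1 n2) A) t1 r ->
  has_code (induced (@rshift n1 n2) A) t2 r ->
  has_code A (join_fun t1 t2) r.
Proof.
set t := join_fun t1 t2.
have -> : t1 = (fun a => t (lshift n2 a)).
  by apply: functional_extensionality => a; rewrite /t join_fun_lshift.
have -> : t2 = (fun b => t (rshift n1 b)).
  by apply: functional_extensionality => b; rewrite /t join_fun_rshift.
case=> phi1 phi1_dec [phi2 phi2_dec].
pose left (x : messages t) a := x (lshift n2 a).
pose right (x : messages t) b := x (rshift n1 b).
exists (fun x => xor_tuple (phi1 (left x)) (phi2 (right x))).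
move=> j; move: (splitK j); case: (fintype.split j) => [a|b] /= <- x x' xx' e.
- have rightxx' : right x = right x'.
    by apply: functional_extensionality_dep => b; apply: xx'.
  rewrite rightxx' in e; move/xor_tuple_injl: e => /phi1_dec; apply=> //.
  by move=> k; rewrite inE => /xx'.
- have leftxx' : left x = left x'.
    by apply: functional_extensionality_dep => a; apply: xx'.
  rewrite leftxx' !(xor_tupleC (phi1 _)) in e.
  move/xor_tuple_injl: e => /phi2_dec; apply=> //.
  by move=> k; rewrite inE => /xx'.
Qed.

Lemma achievable_join R1 R2 :
  achievable (induced (@lshift n1 n2) A) R1 ->
  achievable (induced (@rshift n1 n2) A) R2 ->
  achievable A (join_fun R1 R2).
Proof.
move=> /achievableP [R1_ge0 [t1 [r1 [r1_gt0 code1 rates1]]]].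
move=> /achievableP [R2_ge0 [t2 [r2 [r2_gt0 code2 rates2]]]].
apply/achievableP; split=> [j|]; first by rewrite /join_fun; case: (fintype.split j).
exists (join_fun (fun a => t1 a * r2) (fun b => t2 b * r1)), (r1 * r2); split.
- by rewrite muln_gt0 r1_gt0 r2_gt0.
- apply: has_code_join; first exact: has_code_repeat.
  by rewrite mulnC; apply: has_code_repeat.
- move=> j; rewrite /join_fun; case: (fintype.split j) => [a|b].
    by rewrite INR_div_mulr.
  by rewrite (mulnC r1) INR_div_mulr.
Qed.

Lemma in_capacity_join R1 R2 :
  in_capacity (induced (@lshift n1 n2) A) R1 ->
  in_capacity (induced (@rshift n1 n2) A) R2 ->
  in_capacity A (join_fun R1 R2).
Proof.
move=> cap1 cap2 eps eps_gt0.
have [R1' [ach1 close1]] := cap1 eps eps_gt0.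
have [R2' [ach2 close2]] := cap2 eps eps_gt0.
exists (join_fun R1' R2'); split; first exact: achievable_join.
by move=> j; rewrite /join_fun; case: (fintype.split j).
Qed.

End Join.

Theorem theorem3 (n1 n2 : nat) (A : 'I_(n1 + n2) -> {set 'I_(n1 + n2)})
  (hA : forall j, j \notin A j)
  (hn1 : (0 < n1)%N) (hn2 : (0 < n2)%N)
  (h12 : forall (j : 'I_n1) (k : 'I_n2), rshift n1 k \in A (lshift n2 j))
  (h21 : forall (j : 'I_n1) (k : 'I_n2), lshift n2 j \in A (rshift n1 k)) :
  forall Rt : 'I_(n1 + n2) -> R,
    in_capacity A Rt <->
    (in_capacity (induced (@lshift n1 n2) A) (fun i => Rt (lshift n2 i)) /\
     in_capacity (induced (@rshift n1 n2) A) (fun i => Rt (rshift n1 i))).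
Proof.
move=> Rt; split=> [Rt_cap | [cap1 cap2]].
- by split; apply: in_capacity_induced => //; [exact: lshift_inj | exact: rshift_inj].
- by rewrite -(join_fun_split Rt); apply: in_capacity_join.
Qed.
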